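(* For $n=0,1,2,\ldots$ let $R_n=\sum_{k=0}^n\binom{n}{k}\binom{n+k}{k}\frac{1}{2k-1}$. Then $\lim_{n\to\infty}\frac{\sqrt[n+1]{R_{n+1}}}{\sqrt[n]{R_n}}=1$. *)

From HB Require Import structures.
From mathcomp Require Import all_boot all_order all_algebra.
From mathcomp Require Import all_classical all_reals all_analysis.
Set Implicit Arguments. Unset Strict Implicit. Unset Printing Implicit Defensive.
Import Order.TTheory GRing.Theory Num.Theory.
Local Open Scope ring_scope.

Definition Rseq (R : realType) (n : nat) : R :=
  \sum_(0 <= k < n.+1) ('C(n, k) * 'C(n + k, k))%:R / (2 * k%:R - 1).

From HB Require Import structures.
From mathcomp Require Import all_boot all_order all_algebra.
From mathcomp Require Import all_classical all_reals all_analysis.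
From mathcomp Require Import zify ring lra.

(* Writing R_n = S_n - 1 with S_n the sum over k >= 1 of positive terms, the
   coefficient C(n,k) C(n+k,k) grows by a factor at most 2(n+1) from n to n+1
   when k <= n, and the new diagonal term is at most four times the old one;
   hence 1 <= R_n <= R_(n+1) <= 8 (n+1) R_n.  For any such sequence
   ln R_n = O(n ln n), and
   (n+2) (ln R_(n+2) / (n+2) - ln R_(n+1) / (n+1))
     = (ln R_(n+2) - ln R_(n+1)) - ln R_(n+1) / (n+1)
   is a difference of two quantities in [0, O(ln n)].  So the logarithm of the
   ratio of consecutive roots is O(ln n / n), which tends to 0. *)

Set Implicit Arguments.
Unset Strict Implicit.
Unset Printing Implicit Defensive.

Import Order.TTheory GRing.Theory Num.Theory numFieldNormedType.Exports.

Definition Rcoef n k := 'C(n, k) * 'C(n + k, k).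

Lemma bin_succ_le n k : k <= n -> 'C(n.+1, k) <= n.+1 * 'C(n, k).
Proof.
move=> le_kn; rewrite [n.+1 * _](mul_bin_down n.+1 k) leq_pmull //; lia.
Qed.

Lemma bin_addSn_le n k : k <= n.+1 -> 'C(n.+1 + k, k) <= 2 * 'C(n + k, k).
Proof.
move=> le_kn; rewrite -(leq_pmul2l (ltn0Sn n)) mulnCA.
have /= := mul_bin_down (n.+1 + k) k; rewrite addSn /= subSn ?leq_addl // addnK => <-.
by rewrite mulnA leq_mul2r; apply/orP; right; lia.
Qed.

Lemma central_bin_succ_le n : 'C(n.+1 + n.+1, n.+1) <= 4 * 'C(n + n, n).
Proof.
have /= := mul_bin_diag (n.+1 + n.+1) n.
rewrite (_ : n.+1 + n.+1 = 2 * n.+1) ?addnS /=; last by lia.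
move=> double.
have := mul_bin_down (n + n).+1 n; rewrite /= subSn ?leq_addr // addnK => half.
rewrite -(leq_pmul2l (ltn0Sn n)) -double -mulnA -half !mulnA leq_mul2r.
by apply/orP; right; lia.
Qed.

Lemma coef_diag_succ n : Rcoef n.+1 n.+1 <= 4 * Rcoef n n.
Proof. by rewrite /Rcoef !binn !mul1n central_bin_succ_le. Qed.

Lemma coef_le_succ n k : Rcoef n k <= Rcoef n.+1 k.
Proof. by rewrite leq_mul // leq_bin2l // addSn. Qed.

Lemma coef_succ_le n k : k <= n -> Rcoef n.+1 k <= 2 * n.+1 * Rcoef n k.
Proof.
move=> le_kn; rewrite /Rcoef.
apply: (leq_trans (leq_mul (bin_succ_le le_kn) (bin_addSn_le (leqW le_kn)))).
by rewrite mulnCA !mulnA.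
Qed.

Local Open Scope classical_set_scope.
Local Open Scope ring_scope.

Section RseqBounds.
Variable R : realType.

Definition Rterm n k : R := (Rcoef n k)%:R / (2 * k%:R - 1).

Definition Rsum1 n := \sum_(1 <= k < n.+1) Rterm n k.

Lemma RseqE n : Rseq R n = Rsum1 n - 1.
Proof.
by rewrite /Rseq big_ltn // !bin0 mulr0 sub0r invrN1 mulrN1 addrC.
Qed.

Lemma Rterm_ge0 n k : (0 < k)%N -> 0 <= Rterm n k.
Proof.
move=> k_gt0; rewrite divr_ge0 // subr_ge0.
have : (1 : R) <= k%:R by rewrite ler1n.
lra.
Qed.

Lemma Rterm_le_scale m n l k c :
  (0 < k <= l)%N -> (Rcoef m l <= c * Rcoef n k)%N -> Rterm m l <= c%:R * Rterm n k.
Proof.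
move=> /andP[k_gt0 le_kl] le_coef; rewrite /Rterm mulrA -(natrM R c).
have k1 : (1 : R) <= k%:R by rewrite ler1n.
have kl : (k%:R : R) <= l%:R by rewrite ler_nat.
apply: ler_pM; rewrite ?ler0n ?ler_nat ?invr_ge0 //; first lra.
by rewrite lef_pV2 ?posrE; lra.
Qed.

Lemma Rterm_le_succ n k : (0 < k)%N -> Rterm n k <= Rterm n.+1 k.
Proof.
move=> k_gt0; have := @Rterm_le_scale n n.+1 k k 1%N; rewrite mul1r mul1n.
by rewrite k_gt0 leqnn coef_le_succ; apply.
Qed.

Lemma Rsum1_le_succ n : Rsum1 n <= Rsum1 n.+1.
Proof.
rewrite [Rsum1 n.+1]big_nat_recr //= /Rsum1.
apply: ler_wpDr; first exact: Rterm_ge0.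
by apply: ler_sum_nat => k /andP[k_gt0 _]; exact: Rterm_le_succ.
Qed.

Lemma Rterm_diag_le_Rsum1 n : (0 < n)%N -> Rterm n n <= Rsum1 n.
Proof.
case: n => // n _.
rewrite /Rsum1 big_nat_recr //= lerDr big_nat.
by apply: sumr_ge0 => k /andP[k_gt0 _]; exact: Rterm_ge0.
Qed.

Lemma Rsum1_succ_le n : (0 < n)%N -> Rsum1 n.+1 <= (2 * n%:R + 6) * Rsum1 n.
Proof.
move=> n_gt0; rewrite {1}/Rsum1 big_nat_recr //=.
have body : \sum_(1 <= k < n.+1) Rterm n.+1 k <= (2 * n.+1)%:R * Rsum1 n.
  rewrite /Rsum1 mulr_sumr; apply: ler_sum_nat => k /andP[k_gt0 le_kn].
  by apply: Rterm_le_scale; rewrite ?k_gt0 ?leqnn ?coef_succ_le.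
have diag : Rterm n.+1 n.+1 <= 4%:R * Rsum1 n.
  apply: le_trans (ler_wpM2l (ler0n _ _) (Rterm_diag_le_Rsum1 n_gt0)).
  by apply: Rterm_le_scale; [rewrite n_gt0 leqnSn | exact: coef_diag_succ].
rewrite natrM -natr1 in body; lra.
Qed.

Lemma Rsum1_1 : Rsum1 1 = 2.
Proof.
by rewrite /Rsum1 big_nat1 /Rterm /Rcoef mulr1 (_ : 2 - 1 = 1 :> R) ?divr1 //; lra.
Qed.

Lemma Rseq_ge1 n : 1 <= Rseq R n.+1.
Proof.
rewrite RseqE; elim: n => [|n IH]; first by rewrite Rsum1_1; lra.
by have := Rsum1_le_succ n.+1; lra.
Qed.

Lemma Rseq_le_succ n : Rseq R n <= Rseq R n.+1.
Proof. by rewrite !RseqE lerD2r Rsum1_le_succ. Qed.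

Lemma Rseq_succ_le n : Rseq R n.+2 <= 8 * n.+2%:R * Rseq R n.+1.
Proof.
have := Rsum1_succ_le (ltn0Sn n); have := Rseq_ge1 n.
rewrite !RseqE -[n.+2]addn2 -[n.+1]addn1 !natrD.
have : (0 : R) <= n%:R by [].
nra.
Qed.

End RseqBounds.

Lemma ln_sqr_le (R : realType) (y : R) : 1 <= y -> ln y ^+ 2 <= 2 * y.
Proof.
move=> y_ge1; have := expR_ge1Dxn 1 (ln_ge0 y_ge1).
by rewrite lnK ?posrE; [rewrite (_ : 2`!%:R = 2 :> R) //; lra | lra].
Qed.

Lemma cvg0_sqr_le_harmonic (R : realType) (y : R^nat) (K : R) :
  (forall n, y n ^+ 2 <= K / n.+1%:R) -> y @ \oo --> 0.
Proof.
move=> y_sqr; apply/cvgr0Pnorm_lt => e e_gt0.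
have e2_gt0 : 0 < e ^+ 2 by apply: exprn_gt0.
near=> n.
have n_big : K / e ^+ 2 < n%:R by near: n; apply: nbhs_infty_gtr.
have : y n ^+ 2 < e ^+ 2.
  apply: le_lt_trans (y_sqr n) _; rewrite ltr_pdivrMr // mulrC -ltr_pdivrMr //.
  by apply: lt_trans n_big _; rewrite ltr_nat.
rewrite -real_normK ?num_real // -[e ^+ 2]real_normK ?num_real //.
by rewrite (gtr0_norm e_gt0) ltr_pXn2r // nnegrE ltW.
Unshelve. all: end_near.
Qed.

Lemma powR_ratioE (R : realType) (a b r s : R) : 0 < a -> 0 < b ->
  a `^ r / b `^ s = expR (r * ln a - s * ln b).
Proof. by move=> a_gt0 b_gt0; rewrite /powR !gt_eqF // expRB. Qed.

Section RootRatio.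
Variables (R : realType) (x : nat -> R) (C : R).
Hypotheses (x_ge1 : forall n, 1 <= x n.+1)
  (x_le_succ : forall n, x n.+1 <= x n.+2)
  (x_succ_le : forall n, x n.+2 <= C * n.+2%:R * x n.+1).

Let x_gt0 n : 0 < x n.+1.
Proof. by have := x_ge1 n; lra. Qed.

Lemma growth_factor_ge1 n : 1 <= C * n.+2%:R.
Proof. by have := x_succ_le n; have := x_le_succ n; have := x_ge1 n; nra. Qed.

Lemma growth_const_gt0 : 0 < C.
Proof. by have := growth_factor_ge1 0; rewrite mulr_natr mulr2n; lra. Qed.

Lemma ln_x_le_growth n : ln (x n.+1) <= n%:R * ln (C * n.+1%:R) + ln (x 1).
Proof.
elim: n => [|n IH]; first by rewrite mul0r add0r.
have C_gt0 := growth_const_gt0.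
have L_ge0 := ln_ge0 (growth_factor_ge1 n).
have x_ln : ln (x n.+2) <= ln (C * n.+2%:R) + ln (x n.+1).
  by rewrite -lnM ?posrE ?ler_ln ?posrE ?mulr_gt0.
have L_mono : ln (C * n.+1%:R) <= ln (C * n.+2%:R).
  by rewrite ler_ln ?posrE ?mulr_gt0 // ler_pM2l // ler_nat.
have : (0 : R) <= n%:R by [].
rewrite -[n.+1%:R]natr1; nra.
Qed.

Definition log_root n := ln (x n.+1) / n.+1%:R.

Lemma log_root_diff_bound n :
  `|n.+2%:R * (log_root n.+1 - log_root n)| <= ln (C * n.+2%:R) + ln (x 1).
Proof.
have C_gt0 := growth_const_gt0.
have M_ge1 : 1 <= n.+1%:R :> R by rewrite ler1n.
set A := ln (x n.+2); set B := ln (x n.+1); set L := ln (C * n.+2%:R).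
set c := ln (x 1).
have L_ge0 : 0 <= L := ln_ge0 (growth_factor_ge1 n).
have c_ge0 : 0 <= c := ln_ge0 (x_ge1 0).
have B_ge0 : 0 <= B := ln_ge0 (x_ge1 n).
have AB_ge0 : 0 <= A - B by rewrite subr_ge0 ler_ln ?posrE.
have AB_le : A - B <= L.
  by rewrite lerBlDr -lnM ?posrE ?ler_ln ?posrE ?mulr_gt0.
have B_le : B <= n.+1%:R * (L + c).
  have B_bound : B <= n%:R * ln (C * n.+1%:R) + c := ln_x_le_growth n.
  have L_mono : ln (C * n.+1%:R) <= L.
    by rewrite ler_ln ?posrE ?mulr_gt0 // ler_pM2l // ler_nat.
  have : (0 : R) <= n%:R by [].
  rewrite -[n.+1%:R]natr1; nra.
have -> : n.+2%:R * (log_root n.+1 - log_root n) = (A - B) - B / n.+1%:R.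
  by rewrite /log_root -/A -/B -[n.+2%:R]natr1; field; lra.
have u_ge0 : 0 <= B / n.+1%:R by rewrite divr_ge0.
have u_le : B / n.+1%:R <= L + c by rewrite ler_pdivrMr ?ltr0Sn // mulrC.
set u := B / n.+1%:R in u_ge0 u_le *.
rewrite ler_norml; apply/andP; split; lra.
Qed.

Lemma log_root_diff_sqr n :
  (log_root n.+1 - log_root n) ^+ 2 <= (4 * C + 2 * ln (x 1) ^+ 2) / n.+1%:R.
Proof.
have d_le := log_root_diff_bound n.
(* (ln y)^2 <= 2 y stands in for ln y = o(y). *)
have L_sqr := ln_sqr_le (growth_factor_ge1 n).
have L_ge0 := ln_ge0 (growth_factor_ge1 n).
have c_ge0 := ln_ge0 (x_ge1 0).
set d := log_root n.+1 - log_root n; set y := n.+2%:R in d_le L_sqr L_ge0 *.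
have y_ge1 : 1 <= y by rewrite ler1n.
have My : n.+1%:R <= y by rewrite ler_nat.
set c := ln (x 1) in d_le c_ge0 *.
have c_sqr : c ^+ 2 <= c ^+ 2 * y by rewrite ler_peMr ?sqr_ge0.
have yd_sqr : (y * d) ^+ 2 <= (4 * C + 2 * c ^+ 2) * y.
  rewrite -real_normK ?num_real //; have := normr_ge0 (y * d).
  set t := `|y * d| in d_le * => t_ge0.
  have : t ^+ 2 <= (ln (C * y) + c) ^+ 2 by rewrite ler_sqr ?nnegrE //; lra.
  have := sqr_ge0 (ln (C * y) - c).
  nra.
have d_sqr : d ^+ 2 * y <= 4 * C + 2 * c ^+ 2.
  rewrite -(ler_pM2r (lt_le_trans ltr01 y_ge1)); rewrite exprMn in yd_sqr; nra.
rewrite ler_pdivlMr ?ltr0Sn //; apply: le_trans d_sqr.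
by rewrite ler_wpM2l ?sqr_ge0.
Qed.

Theorem root_ratio_cvg1 :
  x n.+2 `^ (n.+2%:R)^-1 / x n.+1 `^ (n.+1%:R)^-1 @[n --> \oo] --> (1 : R).
Proof.
have -> : (fun n => x n.+2 `^ (n.+2%:R)^-1 / x n.+1 `^ (n.+1%:R)^-1) =
    (fun n => expR (log_root n.+1 - log_root n)).
  by apply: funext => n; rewrite powR_ratioE // /log_root ![_^-1 * _]mulrC.
rewrite -expR0; apply: continuous_cvg; first exact: continuous_expR.
exact: cvg0_sqr_le_harmonic log_root_diff_sqr.
Qed.

End RootRatio.

Theorem theorem4p4 (R : realType) :
  (Rseq R n.+2) `^ (n.+2%:R)^-1 / (Rseq R n.+1) `^ (n.+1%:R)^-1
    @[n --> \oo] --> (1 : R).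
Proof.
apply: (@root_ratio_cvg1 R (Rseq R) 8); [exact: Rseq_ge1 | | exact: Rseq_succ_le].
by move=> n; exact: Rseq_le_succ.
Qed.
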